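(* Let $u=u_1\cdots u_n$ be a word over a finite alphabet and let $s$ be a nonempty factor of $u$. Let $\mathit{first}(s)$ and $\mathit{last}(s)$ be the smallest and the largest starting positions of occurrences of $s$ in $u$. Then $s$ is a border seed of $u$ if and only if $$|s|\ \ge\ \max\Big(\mathrm{per}\big(u[1 .. \mathit{first}(s)+|s|-1]\big),\ \mathrm{per}\big(u[\mathit{last}(s) .. n]\big)\Big).$$
   Context: Positions in a word $u$ are numbered $1,\dots,|u|$; $u[i..j]=u_i\cdots u_j$ is a factor. For a nonempty word $x$, $\mathrm{per}(x)$ is the smallest positive integer $p$ such that $x_i=x_{i+p}$ for all $1\le i\le |x|-p$. A word $s$ covers a word $w$ if every position of $w$ lies inside some occurrence of $s$ as a factor of $w$. A word $s$ is a seed of $u$ if $s$ is a factor of $u$ and $u$ is a factor of some word $w$ covered by $s$. For a factor $s$ of $u$, decompose $u=w_1w_2w_3$ where $w_2=u[\mathit{first}(s) .. \mathit{last}(s)+|s|-1]$ (the longest factor of $u$ having $s$ as a border); $s$ is called a border seed of $u$ if $s$ is a seed of the word $w_1\, s\, w_3$. *)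

From mathcomp Require Import all_boot.
Set Implicit Arguments. Unset Strict Implicit. Unset Printing Implicit Defensive.

(* Words are sequences over a finite alphabet A (a finType).
   Internally, 0-based indices; the paper's 1-based conventions are
   reproduced by [factor], [firstpos], [lastpos]. *)

Section Words.
Variable A : finType.

(* u[i..j] with 1-based positions i, j (empty if j < i). *)
Definition factor (u : seq A) (i j : nat) : seq A := take (j.+1 - i) (drop i.-1 u).

Definition periodb (x : seq A) (p : nat) : bool :=
  (0 < p) && all (fun i => onth x i == onth x (i + p)) (iota 0 (size x - p)).

Lemma period_exists (x : seq A) : exists p, periodb x p.
Proof.
exists (size x).+1; rewrite /periodb /=.
by have -> : size x - (size x).+1 = 0 by apply/eqP; rewrite subn_eq0 leqnSn.
Qed.

Definition per (x : seq A) : nat := ex_minn (period_exists x).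

Definition occurs_at (w s : seq A) (i : nat) : bool :=
  (i + size s <= size w) && (take (size s) (drop i w) == s).

Definition covers (s w : seq A) : Prop :=
  forall j, j < size w -> exists i, occurs_at w s i /\ i <= j < i + size s.

Definition seed (s u : seq A) : Prop :=
  infix s u /\ exists w : seq A, infix u w /\ covers s w.

Definition firstpos (u s : seq A) : nat :=
  (find (occurs_at u s) (iota 0 (size u).+1)).+1.
Definition lastpos (u s : seq A) : nat :=
  (\max_(i < (size u).+1 | occurs_at u s i) (i : nat)).+1.

(* u = w1 w2 w3 with w2 = u[first(s) .. last(s)+|s|-1];
   s is a border seed of u iff s is a seed of w1 s w3. *)
Definition border_seed (s u : seq A) : Prop :=
  let w1 := factor u 1 (firstpos u s).-1 in
  let w3 := factor u (lastpos u s + size s) (size u) in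
  seed s (w1 ++ s ++ w3).

End Words.

From mathcomp Require Import all_boot zify.
Set Implicit Arguments. Unset Strict Implicit. Unset Printing Implicit Defensive.

(* With L := u[1 .. first(s)-1] and R := u[last(s)+|s| .. n], the two factors in
   the statement are L s and s R, s occurs in L s only as its suffix, and in s R
   only as its prefix.  If a word covered by s contains L s R, the occurrence of s
   covering the last letter of L must start before L and overlap the occurrence
   following L; two overlapping occurrences at distance d make their union
   d-periodic, so L s has a period d <= |s|, and symmetrically for s R.
   Conversely, if L s and s R have periods p, q <= |s|, then extending L s
   p-periodically to the left and s R q-periodically to the right yields words
   covered by s (occurrences every p, resp. q, positions), which glue along s
   into a word covered by s that contains L s R. *)

Section BorderSeeds.
Variables (A : finType) (x0 : A).
Implicit Types (u w x y s L R P Q : seq A).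

Lemma occurs_atP w s i :
  reflect (i + size s <= size w /\
           forall k, k < size s -> nth x0 w (i + k) = nth x0 s k)
          (occurs_at w s i).
Proof.
apply: (iffP andP) => -[fits].
  by move=> /eqP occ; split=> // k lt_k; rewrite -occ nth_take // nth_drop.
move=> eq_nth; split=> //.
have sz : size (take (size s) (drop i w)) = size s.
  by rewrite size_takel // size_drop; lia.
apply/eqP/(eq_from_nth (x0 := x0) sz) => k; rewrite sz => lt_k.
by rewrite nth_take // nth_drop eq_nth.
Qed.

Lemma occurs_at_catr x y s i : occurs_at (x ++ y) s (size x + i) = occurs_at y s i.
Proof.
by rewrite /occurs_at size_cat -addnA leq_add2l drop_cat ltnNge leq_addr /= addKn.
Qed.

Lemma occurs_at_catl x y s i :
  i + size s <= size x -> occurs_at (x ++ y) s i = occurs_at x s i.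
Proof.
move=> fits; rewrite /occurs_at fits size_cat (leq_trans fits (leq_addr _ _)) /=.
have [lt_i | ge_i] := ltnP i (size x).
  by rewrite drop_cat lt_i takel_cat // size_drop; lia.
have /size0nil -> : size s = 0 by lia.
by rewrite !take0.
Qed.

Lemma occurs_at_mid x s y : occurs_at (x ++ s ++ y) s (size x).
Proof.
rewrite -[size x]addn0 occurs_at_catr occurs_at_catl ?add0n //.
by rewrite /occurs_at add0n leqnn drop0 take_size eqxx.
Qed.

Lemma occurs_at_drop u s i : occurs_at u s i -> drop i u = s ++ drop (i + size s) u.
Proof.
case/andP=> _ /eqP occ.
by rewrite -{1}(cat_take_drop (size s) (drop i u)) occ drop_drop addnC.
Qed.

Lemma occurs_at_take u s i : occurs_at u s i -> take (i + size s) u = take i u ++ s.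
Proof. by case/andP=> _ /eqP occ; rewrite takeD occ. Qed.

Lemma covers_cat a s b :
  covers s (a ++ s) -> covers s (s ++ b) -> covers s (a ++ s ++ b).
Proof.
move=> cov_a cov_b j; rewrite !size_cat => lt_j.
have [j_left | j_right] := ltnP j (size a + size s).
  have [i [occ_i cov_j]] := cov_a j ltac:(by rewrite size_cat).
  exists i; split=> //; rewrite catA occurs_at_catl //; by case/andP: occ_i.
have [i [occ_i cov_j]] := cov_b (j - size a) ltac:(rewrite size_cat; lia).
by exists (size a + i); rewrite occurs_at_catr; split=> //; lia.
Qed.

Lemma periodbP x p :
  reflect (0 < p /\ forall i, i + p < size x -> nth x0 x i = nth x0 x (i + p))
          (periodb x p).
Proof.
have onth_in i : i < size x -> onth x i = Some (nth x0 x i).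
  by move=> lt_i; rewrite onthE (nth_map x0).
apply: (iffP andP) => -[p_gt0 per_x]; split=> //.
  move=> i lt_i; have := allP per_x i; rewrite mem_iota add0n !onth_in; try lia.
  by move/(_ ltac:(lia))/eqP => [].
apply/allP => i; rewrite mem_iota add0n => /andP[_ lt_i].
by rewrite !onth_in ?(per_x i) //; lia.
Qed.

Lemma per_gt0 x : 0 < per x.
Proof. by rewrite /per; case: ex_minnP => p /andP[]. Qed.

Lemma per_period x : periodb x (per x).
Proof. by rewrite /per; case: ex_minnP. Qed.

Lemma leq_per x p : periodb x p -> per x <= p.
Proof. by rewrite /per; case: ex_minnP => m _; apply. Qed.

Lemma per_le_size x : x != [::] -> per x <= size x.
Proof.
move=> x_nz; apply/leq_per/periodbP; split=> [|i lt_i]; last lia.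
by rewrite lt0n size_eq0.
Qed.

Lemma periodb_drop x p n : periodb x p -> periodb (drop n x) p.
Proof.
move/periodbP=> [p_gt0 per_x]; apply/periodbP; split=> // i.
by rewrite size_drop !nth_drop addnA => lt_i; apply: per_x; lia.
Qed.

Lemma periodb_take x p n : periodb x p -> periodb (take n x) p.
Proof.
move/periodbP=> [p_gt0 per_x]; apply/periodbP; split=> // i.
rewrite size_take_min => lt_i; rewrite !nth_take; try lia.
by apply: per_x; lia.
Qed.

Lemma periodb_mod x p i : periodb x p -> i < size x -> nth x0 x i = nth x0 x (i %% p).
Proof.
move=> /periodbP[p_gt0 per_x]; elim: i {-2}i (leqnn i) => [|n IHn] i le_in lt_i.
  by rewrite (_ : i = 0) ?mod0n //; lia.
have [lt_ip | le_pi] := ltnP i p; first by rewrite modn_small.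
have -> : i = (i - p) + p by lia.
rewrite -per_x ?(IHn (i - p)) ?modnDr //; lia.
Qed.

Lemma periodb_eqmod x p i j : periodb x p -> i < size x -> j < size x ->
  i = j %[mod p] -> nth x0 x i = nth x0 x j.
Proof.
move=> per_x lt_i lt_j eq_ij.
by rewrite (periodb_mod per_x lt_i) (periodb_mod per_x lt_j) eq_ij.
Qed.

Lemma overlap_period w s i m : occurs_at w s i -> occurs_at w s m ->
  i < m <= i + size s -> periodb (drop i (take (m + size s) w)) (m - i).
Proof.
move=> /occurs_atP[_ occ_i] /occurs_atP[fit_m occ_m] /andP[lt_im le_m].
apply/periodbP; split=> [|k]; first lia.
rewrite size_drop size_takel // => lt_k.
have lt_ks : k < size s by lia.
rewrite !nth_drop !nth_take; try lia.
have -> : i + (k + (m - i)) = m + k by lia.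
by rewrite occ_i // occ_m.
Qed.

Lemma covers_per_left P L s Q : s != [::] ->
  (forall i, occurs_at (L ++ s) s i -> size L <= i) ->
  covers s (P ++ (L ++ s) ++ Q) -> per (L ++ s) <= size s.
Proof.
move=> s_nz suffix_first cov.
have [-> | L_nz] := eqVneq L [::]; first exact: per_le_size.
have L_gt0 : 0 < size L by rewrite lt0n size_eq0.
set w := P ++ (L ++ s) ++ Q.
have occ_m : occurs_at w s (size P + size L).
  by rewrite -size_cat (_ : w = (P ++ L) ++ s ++ Q) ?occurs_at_mid // /w !catA.
have [i [occ_i /andP[le_i lt_i]]] := cov (size P + size L).-1 ltac:(rewrite !size_cat; lia).
have [le_Pi | lt_iP] := leqP (size P) i.
  have fits : i - size P + size s <= size (L ++ s) by rewrite size_cat; lia.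
  move: occ_i; rewrite -(subnKC le_Pi) occurs_at_catr occurs_at_catl //.
  by move/suffix_first; lia.
have per_w := overlap_period occ_i occ_m ltac:(apply/andP; split; lia).
have -> : L ++ s = drop (size P - i) (drop i (take (size P + size L + size s) w)).
  rewrite drop_drop subnK 1?ltnW // /w catA take_size_cat ?drop_size_cat //.
  by rewrite !size_cat addnA.
by apply: leq_trans (leq_per (periodb_drop _ per_w)) _; lia.
Qed.

Lemma covers_per_right P s R Q : s != [::] ->
  (forall i, occurs_at (s ++ R) s i -> i = 0) ->
  covers s (P ++ (s ++ R) ++ Q) -> per (s ++ R) <= size s.
Proof.
move=> s_nz prefix_last cov.
have [-> | R_nz] := eqVneq R [::]; first by rewrite cats0; exact: per_le_size.
have R_gt0 : 0 < size R by rewrite lt0n size_eq0.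
set w := P ++ (s ++ R) ++ Q.
have occ_m : occurs_at w s (size P) by rewrite /w -catA occurs_at_mid.
have [i [occ_i /andP[le_i lt_i]]] := cov (size P + size s) ltac:(rewrite !size_cat; lia).
have [fits | past_R] := leqP (i + size s) (size P + size (s ++ R)).
  move: occ_i; rewrite -(@subnKC (size P) i); last lia.
  by rewrite occurs_at_catr occurs_at_catl; [move/prefix_last; lia | lia].
have per_w := overlap_period occ_m occ_i ltac:(apply/andP; split; lia).
have -> : s ++ R = take (size (s ++ R)) (drop (size P) (take (i + size s) w)).
  rewrite /w take_cat ltnNge (_ : size P <= i + size s) /=; last lia.
  by rewrite drop_size_cat // take_takel ?take_size_cat //; lia.
by apply: leq_trans (leq_per (periodb_take _ per_w)) _; lia.
Qed.

Definition periodic_ext s p n : seq A := mkseq (fun k => nth x0 s (k %% p)) n.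

Lemma occurs_at_periodic_ext s p K c : periodb s p -> c <= K ->
  occurs_at (periodic_ext s p (K * p + size s)) s (c * p).
Proof.
move=> per_s le_cK; have le_cpKp : c * p <= K * p by rewrite leq_mul2r le_cK orbT.
apply/occurs_atP; rewrite size_mkseq; split=> [|k lt_k]; first lia.
by rewrite nth_mkseq ?modnMDl -?(periodb_mod per_s) //; lia.
Qed.

Lemma covers_periodic_ext s p K : 0 < p <= size s -> periodb s p ->
  covers s (periodic_ext s p (K * p + size s)).
Proof.
move=> /andP[p_gt0 le_ps] per_s j; rewrite size_mkseq => lt_j.
set q := minn (j %/ p) K.
exists (q * p); split; first exact/occurs_at_periodic_ext/geq_minr.
have le_qp : q * p <= j %/ p * p by rewrite leq_mul2r geq_minl orbT.
have := leq_divM j p; have := ltn_ceil j p_gt0; rewrite mulSn.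
have [le_jK | lt_Kj] := leqP (j %/ p) K.
  by rewrite /q (minn_idPl le_jK); lia.
have le_Kp : K * p <= j %/ p * p by rewrite leq_mul2r ltnW ?orbT.
by rewrite /q (minn_idPr (ltnW lt_Kj)); lia.
Qed.

Lemma periodic_prefix_covered s R p : 0 < p <= size s -> periodb (s ++ R) p ->
  exists Q, covers s (s ++ R ++ Q).
Proof.
move=> /andP[p_gt0 le_ps] per_sR.
have per_s : periodb s p by rewrite -(take_size_cat R (erefl (size s))) periodb_take.
set Z := periodic_ext s p (size R * p + size s).
have le_RZ : size R <= size R * p by rewrite leq_pmulr.
have prefix_Z : take (size s + size R) Z = s ++ R.
  have sz : size (take (size s + size R) Z) = size (s ++ R).
    by rewrite size_cat size_takel // /Z size_mkseq; lia.
  apply: (eq_from_nth (x0 := x0) sz) => k; rewrite sz size_cat => lt_k.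
  have lt_kp : k %% p < p by rewrite ltn_mod.
  rewrite nth_take // nth_mkseq; last lia.
  by rewrite (periodb_mod per_sR) ?size_cat // nth_cat ifT //; lia.
exists (drop (size s + size R) Z).
by rewrite catA -prefix_Z cat_take_drop; apply: covers_periodic_ext => //; apply/andP.
Qed.

Lemma periodic_suffix_covered L s p : 0 < p <= size s -> periodb (L ++ s) p ->
  exists P, covers s (P ++ L ++ s).
Proof.
move=> /andP[p_gt0 le_ps] per_Ls.
have per_s : periodb s p by rewrite -(drop_size_cat s (erefl (size L))) periodb_drop.
set Z := periodic_ext s p (size L * p + size s).
have le_LZ : size L <= size L * p by rewrite leq_pmulr.
set d := size L * p - size L.
have suffix_Z : drop d Z = L ++ s.
  have sz : size (drop d Z) = size (L ++ s) by rewrite size_drop /Z size_mkseq size_cat; lia.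
  apply: (eq_from_nth (x0 := x0) sz) => k; rewrite sz size_cat => lt_k.
  have lt_rp : (d + k) %% p < p by rewrite ltn_mod.
  rewrite nth_drop nth_mkseq; last lia.
  have -> : nth x0 s ((d + k) %% p) = nth x0 (L ++ s) (size L + (d + k) %% p).
    by rewrite nth_cat ltnNge leq_addr /= addKn.
  apply: (periodb_eqmod per_Ls); rewrite ?size_cat; try lia.
  by rewrite modnDmr addnA (_ : size L + d = size L * p) ?modnMDl //; lia.
exists (take d Z).
by rewrite -suffix_Z cat_take_drop; apply: covers_periodic_ext => //; apply/andP.
Qed.

Lemma seed_of_per L s R :
  maxn (per (L ++ s)) (per (s ++ R)) <= size s -> seed s (L ++ s ++ R).
Proof.
rewrite geq_max => /andP[le_left le_right].
have bounds x : per x <= size s -> 0 < per x <= size s by rewrite per_gt0.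
have [P cov_P] := periodic_suffix_covered (bounds _ le_left) (per_period _).
have [Q cov_Q] := periodic_prefix_covered (bounds _ le_right) (per_period _).
split; first exact: infix_infix.
exists (P ++ (L ++ s ++ R) ++ Q); split; first by apply/infixP; exists P, Q.
have -> : P ++ (L ++ s ++ R) ++ Q = (P ++ L) ++ s ++ (R ++ Q) by rewrite !catA.
by apply: covers_cat; rewrite -?catA.
Qed.

Lemma seed_border_iff L s R : s != [::] ->
  (forall i, occurs_at (L ++ s) s i -> size L <= i) ->
  (forall i, occurs_at (s ++ R) s i -> i = 0) ->
  seed s (L ++ s ++ R) <-> maxn (per (L ++ s)) (per (s ++ R)) <= size s.
Proof.
move=> s_nz suffix_first prefix_last; split; last exact: seed_of_per.
case=> _ [_ [/infixP[P [Q ->]] cov]]; rewrite geq_max; apply/andP; split.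
  by apply: (covers_per_left (P := P) (Q := R ++ Q)) => //; move: cov; rewrite !catA.
by apply: (covers_per_right (P := P ++ L) (Q := Q)) => //; move: cov; rewrite !catA.
Qed.

End BorderSeeds.

Section Positions.
Variable A : finType.
Implicit Types u s : seq A.

Lemma occurs_at_firstpos u s i : occurs_at u s i -> occurs_at u s (firstpos u s).-1.
Proof.
move=> occ_i; have lt_i : i < (size u).+1 by case/andP: occ_i; lia.
have has_occ : has (occurs_at u s) (iota 0 (size u).+1).
  by apply/hasP; exists i; rewrite ?mem_iota.
move: (nth_find 0 has_occ); rewrite nth_iota //.
by rewrite -[X in _ < X](size_iota 0) -has_find.
Qed.

Lemma firstpos_min u s i : occurs_at u s i -> (firstpos u s).-1 <= i.
Proof.
move=> occ_i; rewrite leqNgt; apply/negP => lt_i.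
have lt_iu : i < (size u).+1.
  by apply: leq_trans lt_i _; rewrite -[X in _ <= X](size_iota 0) find_size.
by move: (before_find 0 lt_i); rewrite nth_iota // add0n occ_i.
Qed.

Lemma lastpos_max u s i : occurs_at u s i -> i <= (lastpos u s).-1.
Proof.
move=> occ_i; have lt_i : i < (size u).+1 by case/andP: occ_i; lia.
exact: (leq_bigmax_cond (Ordinal lt_i)).
Qed.

Lemma occurs_at_lastpos u s i : occurs_at u s i -> occurs_at u s (lastpos u s).-1.
Proof.
move=> occ_i; have lt_i : i < (size u).+1 by case/andP: occ_i; lia.
by rewrite /lastpos /= (bigmax_eq_arg (Ordinal lt_i)) //; case: arg_maxnP.
Qed.

Lemma factor_prefix u j : factor u 1 j = take j u.
Proof. by rewrite /factor subn1 drop0. Qed.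

Lemma factor_suffix u i : factor u i (size u) = drop i.-1 u.
Proof. by rewrite /factor take_oversize // size_drop; lia. Qed.

End Positions.

Theorem fact1 (A : finType) (u s : seq A) :
  s != [::] -> infix s u ->
  (border_seed s u <->
   maxn (per (factor u 1 (firstpos u s + size s - 1)))
        (per (factor u (lastpos u s) (size u))) <= size s).
Proof.
move=> s_nz /infixP[a [b u_eq]].
have [x0 _] : exists x0 : A, x0 \in s.
  by case: s s_nz {u_eq} => // x s' _; exists x; rewrite mem_head.
have occ_a : occurs_at u s (size a) by rewrite u_eq occurs_at_mid.
have occ_f := occurs_at_firstpos occ_a; have min_f := @firstpos_min _ u s.
have occ_l := occurs_at_lastpos occ_a; have max_l := @lastpos_max _ u s.
rewrite /border_seed factor_prefix !factor_suffix !factor_prefix.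
have [f fE] : exists f, firstpos u s = f.+1 by eexists.
have [l lE] : exists l, lastpos u s = l.+1 by eexists.
rewrite fE lE /= in occ_f min_f occ_l max_l *.
rewrite addSn subn1 /= (occurs_at_take occ_f) (occurs_at_drop occ_l).
have le_fu : f <= size u by case/andP: occ_f; lia.
apply: (seed_border_iff x0) => // i.
  rewrite -(occurs_at_take occ_f) size_takel // => occ_i; apply: min_f.
  by rewrite -(cat_take_drop (f + size s) u) occurs_at_catl //; case/andP: occ_i.
rewrite -(occurs_at_drop occ_l) => occ_i.
have le_lu : l <= size u by case/andP: occ_l; lia.
move: occ_i; rewrite -(occurs_at_catr (take l u)) cat_take_drop size_takel //.
by move/max_l; lia.
Qed.
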